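(* Let $\mu$ be a Borel probability measure on $\mathbb{R}^d$ and $u\in\mathbb{R}^d$. Let $\{\theta_k\}_{k\in\mathbb{N}}\subset(0,\pi/2)$ and $\{v_k\}_{k\in\mathbb{N}}\subset\mathcal{S}^{d-1}$ satisfy $\theta_k\to0^+$ and $v_k\to v$ as $k\to\infty$. Then $$\limsup_{k\to\infty}\mu(\mathcal{A}_{u,v_k,\theta_k})\leq\mu(\{y:\langle y-u,v\rangle\geq0\}).$$
   Context: For $u\in\mathbb{R}^d$, $e\in\mathcal{S}^{d-1}$, $\theta\in(0,\pi/2)$: $\mathcal{A}_{u,e,\theta}=\{y\in\mathbb{R}^d:\langle u-y,e\rangle\leq\|u-y\|\,|\sin\theta|/(1-\sin^2\theta)^{1/2}\}$. *)

From HB Require Import structures.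
From mathcomp Require Import all_boot all_order all_algebra.
From mathcomp Require Import all_classical all_reals all_analysis.
Set Implicit Arguments. Unset Strict Implicit. Unset Printing Implicit Defensive.
Import Order.TTheory GRing.Theory Num.Theory.
Import numFieldNormedType.Exports.
Local Open Scope classical_set_scope.
Local Open Scope ring_scope.

(* R^d is represented by row vectors 'rV[R]_d (product topology = Euclidean
   topology).  Its Borel sigma-algebra is the one generated by the open sets. *)
Definition Rd (R : realType) (d : nat) :=
  g_sigma_algebraType (@open ('rV[R]_d)).

Definition dotp (R : realType) (d : nat) (x y : 'rV[R]_d) : R :=
  \sum_(i < d) x ord0 i * y ord0 i.
Definition enorm (R : realType) (d : nat) (x : 'rV[R]_d) : R :=
  Num.sqrt (dotp x x).

Definition unit_sphere (R : realType) (d : nat) : set 'rV[R]_d :=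
  [set e | enorm e = 1].

Definition coneA (R : realType) (d : nat) (u e : 'rV[R]_d) (theta : R)
  : set (Rd R d) :=
  [set y : 'rV[R]_d | dotp (u - y) e <=
     enorm (u - y) * (`|sin theta| / Num.sqrt (1 - sin theta ^+ 2))].

Definition halfspace (R : realType) (d : nat) (u v : 'rV[R]_d) : set (Rd R d) :=
  [set y : 'rV[R]_d | 0 <= dotp (y - u) v].

From HB Require Import structures.
From mathcomp Require Import all_boot all_order all_algebra.
From mathcomp Require Import all_classical all_reals all_analysis.
Set Implicit Arguments. Unset Strict Implicit. Unset Printing Implicit Defensive.
Import Order.TTheory GRing.Theory Num.Theory.
Import numFieldNormedType.Exports.
Local Open Scope classical_set_scope.
Local Open Scope ring_scope.

(* Reverse Fatou for sets: for a finite measure, limsup_k mu(A_k) is at most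
   the measure of limsup_k A_k, the set of points lying in infinitely many A_k.
   The cones A_k are closed, hence Borel.  A point y lying in infinitely many of
   them satisfies <u - y, v_k> <= |u - y| |tan theta_k| infinitely often, and
   since tan theta_k -> 0 and v_k -> v this forces <u - y, v> <= 0, i.e. y lies
   in the closed half-space. *)

Section limn_esup_measure.
Context d (T : measurableType d) (R : realType).
Variable mu : {finite_measure set T -> \bar R}.

Lemma limn_esup_measure_le (F : (set T)^nat) : (forall k, measurable (F k)) ->
  (limn_esup (mu \o F) <= mu (lim_sup_set F))%E.
Proof.
move=> mF.
have mU n : measurable (\bigcup_(k >= n) F k).
  by apply: bigcup_measurable => k _; exact: mF.
have cvgU : mu (\bigcup_(k >= n) F k) @[n --> \oo] --> mu (lim_sup_set F).
  by apply: lim_sup_set_cvg => //; rewrite ltey_eq fin_num_measure.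
rewrite limn_esup_lim -(cvg_lim _ cvgU) //.
apply: lee_lim; [exact: is_cvg_esups | exact: cvgP cvgU |].
apply: nearW => n; apply: ge_ereal_sup => _ [k /= nk <-].
by apply: le_measure; rewrite ?inE; [exact: mF | exact: mU | exact: bigcup_sup].
Qed.

End limn_esup_measure.

Lemma closed_measurable_borel (T : ptopologicalType) (A : set T) :
  closed A -> measurable (A : set (g_sigma_algebraType (@open T))).
Proof.
move=> cA; rewrite -(setCK A); apply: measurableC.
by apply: sub_gen_smallest; exact: closed_openC.
Qed.

Lemma closed_ge0_continuous (T : topologicalType) (R : realType) (g : T -> R) :
  continuous g -> closed [set y | 0 <= g y].
Proof.
by move=> gc; apply: (@preimage_closed _ _ g [set x | 0 <= x]) => [y _|];
  [exact: gc | exact: closed_ge].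
Qed.

Section dotp_cvg.
Context (R : realType) (d : nat) (T : Type) (F : set_system T) {FF : Filter F}.
Implicit Types f g : T -> 'rV[R]_d.

Lemma cvg_dotp f g a b : f @ F --> a -> g @ F --> b ->
  dotp (f x) (g x) @[x --> F] --> dotp a b.
Proof.
move=> fa gb; rewrite /dotp.
have cvg_coord i : f x ord0 i * g x ord0 i @[x --> F] --> a ord0 i * b ord0 i.
  by apply: cvgM; [exact: (continuous_cvg _ (@coord_continuous _ _ _ ord0 i a)) |
    exact: (continuous_cvg _ (@coord_continuous _ _ _ ord0 i b))].
elim: (index_enum _) => [|i r IHr].
  by rewrite big_nil; under eq_fun do rewrite big_nil; exact: cvg_cst.
by rewrite big_cons; under eq_fun do rewrite big_cons; exact: cvgD.
Qed.

Lemma cvg_enorm f a : f @ F --> a -> enorm (f x) @[x --> F] --> enorm a.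
Proof.
move=> fa; rewrite /enorm.
by apply: continuous_cvg; [exact: sqrt_continuous | exact: cvg_dotp].
Qed.

End dotp_cvg.

Lemma dotpNl (R : realType) (d : nat) (x v : 'rV[R]_d) :
  dotp (- x) v = - dotp x v.
Proof. by rewrite /dotp -sumrN; apply: eq_bigr => i _; rewrite mxE mulNr. Qed.

(* Equal to [`|tan theta|] when [`|theta| < pi / 2]. *)
Definition cone_slope (R : realType) (theta : R) : R :=
  `|sin theta| / Num.sqrt (1 - sin theta ^+ 2).

Lemma cone_slope_cvg0 (R : realType) (T : Type) (F : set_system T) {FF : Filter F}
    (theta : T -> R) :
  theta @ F --> 0 -> cone_slope (theta x) @[x --> F] --> 0.
Proof.
move=> theta0.
have sin_theta0 : sin (theta x) @[x --> F] --> 0.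
  by rewrite -(sin0 R); apply: continuous_cvg => //; exact: continuous_sin.
have cos_theta1 : Num.sqrt (1 - sin (theta x) ^+ 2) @[x --> F] --> (1 : R).
  rewrite -[X in _ --> X]sqrtr1; apply: continuous_cvg; first exact: sqrt_continuous.
  rewrite -[X in _ --> X]subr0 -(mulr0 0); under eq_fun do rewrite expr2.
  exact: cvgB (cvg_cst _) (cvgM sin_theta0 sin_theta0).
rewrite -(mul0r 1^-1); apply: cvgM; last exact: cvgV.
by rewrite -(@normr0 _ R^o); exact: cvg_norm.
Qed.

Section cone_geometry.
Context (R : realType) (d : nat).
Implicit Types u v e : 'rV[R]_d.

Lemma closed_coneA u e theta : closed (coneA u e theta : set 'rV[R]_d).
Proof.
have -> : coneA u e theta =
    [set y | 0 <= enorm (u - y) * cone_slope theta - dotp (u - y) e].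
  by apply/seteqP; split => y; rewrite /= subr_ge0.
apply: closed_ge0_continuous => y.
have uy : u - x @[x --> nbhs y] --> u - y.
  by apply: cvgB; [exact: cvg_cst | exact: cvg_id].
apply: (@cvgB _ _ _ (nbhs y)).
- by apply: cvgM; [exact: cvg_enorm uy | exact: cvg_cst].
- exact: cvg_dotp uy (cvg_cst e).
Qed.

Lemma closed_halfspace u v : closed (halfspace u v : set 'rV[R]_d).
Proof.
apply: closed_ge0_continuous => y.
have yu : x - u @[x --> nbhs y] --> y - u.
  by apply: cvgB; [exact: cvg_id | exact: cvg_cst].
exact: cvg_dotp yu (cvg_cst v).
Qed.

Lemma lim_sup_set_coneA_sub_halfspace u (theta : nat -> R) (vs : nat -> 'rV[R]_d) v :
  theta @ \oo --> 0 -> vs @ \oo --> v ->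
  lim_sup_set (fun k => coneA u (vs k) (theta k)) `<=` halfspace u v.
Proof.
move=> theta0 vsv y limsup_y; rewrite /halfspace /= -opprB dotpNl oppr_ge0 leNgt.
apply/negP => uy_v_gt0.
have gap_cvg : dotp (u - y) (vs k) - enorm (u - y) * cone_slope (theta k) @[k --> \oo]
    --> dotp (u - y) v.
  rewrite -[X in _ --> X]subr0 -(mulr0 (enorm (u - y))).
  apply: cvgB; first exact: cvg_dotp (cvg_cst _) vsv.
  exact: cvgM (cvg_cst _) (cone_slope_cvg0 theta0).
have [N _ gap_gt0] := cvgr_gt _ gap_cvg _ uy_v_gt0.
have [k /= Nk] := limsup_y N I.
by rewrite /coneA /= leNgt -subr_gt0 gap_gt0.
Qed.

End cone_geometry.

Theorem mainTheorem6 (R : realType) (d : nat) (mu : probability (Rd R d) R)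
  (u : 'rV[R]_d) (theta : nat -> R) (vs : nat -> 'rV[R]_d) (v : 'rV[R]_d) :
  (forall k, 0 < theta k < pi / 2) ->
  (forall k, unit_sphere (vs k)) ->
  theta @ \oo --> 0 ->
  vs @ \oo --> v ->
  (limn_esup (fun k => mu (coneA u (vs k) (theta k))) <= mu (halfspace u v))%E.
Proof.
move=> _ _ theta0 vsv.
have mA k : measurable (coneA u (vs k) (theta k)).
  by apply: closed_measurable_borel; exact: closed_coneA.
apply: le_trans (limn_esup_measure_le mu mA) _.
apply: le_measure; rewrite ?inE.
- by apply: bigcap_measurable => // n _; exact: bigcup_measurable.
- by apply: closed_measurable_borel; exact: closed_halfspace.
- exact: lim_sup_set_coneA_sub_halfspace.
Qed.
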